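(* Let $n\ge1$. For every $\mathcal C\in\mathbf{Rel}^n\mathbf{Cat}$, the counit map $\varepsilon\mathcal C\colon KN\mathcal C\to\mathcal C$ of the adjunction $K\dashv N$ is an isomorphism in $\mathbf{Rel}^n\mathbf{Cat}$.
   Context: An $n$-relative category $\mathcal C=(a\mathcal C,v_1\mathcal C,\dots,v_n\mathcal C,w\mathcal C)$ consists of a category $a\mathcal C$ and subcategories $v_1\mathcal C,\dots,v_n\mathcal C,w\mathcal C\subset a\mathcal C$, each containing all objects, with $w\mathcal C\subset v_i\mathcal C$ for all $i$, such that (i) every map of $a\mathcal C$ is a finite composite of maps in the $v_i\mathcal C$, and (ii) every relation in $a\mathcal C$ is a consequence of the commutativity of squares $y_2x_1=x_2y_1$ with $x_1,x_2\in v_i\mathcal C$, $y_1,y_2\in v_j\mathcal C$ ($i,j$ not necessarily distinct). $\mathbf{Rel}^n\mathbf{Cat}$ is the category of small $n$-relative categories and functors of ambient categories preserving $w$ and each $v_i$. For $p\ge0$, $\mathbf p$ is the poset $0\to\cdots\to p$ and $|\mathbf p|$ its discrete subcategory; $\mathbf p_n^{v_n}\times\cdots\times\mathbf p_1^{v_1}\times\mathbf q^w$ is the $n$-relative category with ambient category $\mathbf p_n\times\cdots\times\mathbf p_1\times\mathbf q$, $w=|\mathbf p_n|\times\cdots\times|\mathbf p_1|\times\mathbf q$, $v_i=|\mathbf p_n|\times\cdots\times\mathbf p_i\times\cdots\times|\mathbf p_1|\times\mathbf q$. $\mathrm{s}^n\mathcal S$ is the category of $(n+1)$-simplicial sets with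 standard multisimplices $\Delta[p_n,\dots,p_1,q]$. The $n$-simplicial nerve $N\mathcal C$ has as $(p_n,\dots,p_1,q)$-simplices the relative functors $\mathbf p_n^{v_n}\times\cdots\times\mathbf p_1^{v_1}\times\mathbf q^w\to\mathcal C$; $K$ is its left adjoint, the colimit-preserving functor with $K\Delta[p_n,\dots,p_1,q]=\mathbf p_n^{v_n}\times\cdots\times\mathbf p_1^{v_1}\times\mathbf q^w$. *)

From Stdlib Require Import ProofIrrelevance.
From mathcomp Require Import all_boot.

Set Implicit Arguments. Unset Strict Implicit. Unset Printing Implicit Defensive.

Record Cat := {
  Ob :> Type;
  Hom : Ob -> Ob -> Type;
  idm : forall x, Hom x x;
  comp : forall x y z, Hom y z -> Hom x y -> Hom x z;
  comp1m : forall x y (f : Hom x y), comp (idm y) f = f;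
  compm1 : forall x y (f : Hom x y), comp f (idm x) = f;
  compA : forall x y z t (f : Hom x y) (g : Hom y z) (h : Hom z t),
      comp h (comp g f) = comp (comp h g) f }.
Arguments Hom {C} x y : rename.
Arguments idm {C} x : rename.
Arguments comp {C x y z} g f : rename.

Record MCat (n : nat) := {
  mcat :> Cat;
  mv : 'I_n -> forall x y : mcat, Hom x y -> Prop;
  mw : forall x y : mcat, Hom x y -> Prop }.
Arguments mv {n C} i {x y} f : rename.
Arguments mw {n C x y} f : rename.

Inductive vpath n (C : MCat n) : C -> C -> Type :=
| vnil x : vpath x x
| vcons x y z (i : 'I_n) (f : Hom x y) : mv i f -> vpath y z -> vpath x z.
Arguments vnil {n C} x.
Arguments vcons {n C x y z} i f _ _.

Fixpoint veval {n} {C : MCat n} {x z : C} (p : vpath x z) : Hom x z :=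
  match p with
  | vnil x => idm x
  | vcons _ _ _ _ f _ r => comp (veval r) f
  end.

(* Elementary relations between composites: commutative squares
   y2 x1 = x2 y1 with x1,x2 in v_i and y1,y2 in v_j, and the fact that an
   identity map (in some v_i) is the empty composite; closed under
   pre- and post-composition. *)
Inductive vstep n (C : MCat n) : forall x z : C, vpath x z -> vpath x z -> Prop :=
| vs_sq a b c d z (i j : 'I_n) (x1 : Hom a b) (y2 : Hom b d) (y1 : Hom a c)
    (x2 : Hom c d) hx1 hy2 hy1 hx2 (r : vpath d z) :
    comp y2 x1 = comp x2 y1 ->
    vstep (vcons i x1 hx1 (vcons j y2 hy2 r)) (vcons j y1 hy1 (vcons i x2 hx2 r))
| vs_id x z (i : 'I_n) (h : mv i (idm x)) (r : vpath x z) :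
    vstep (vcons i (idm x) h r) r
| vs_cons x y z (i : 'I_n) (f : Hom x y) hf (p q : vpath y z) :
    vstep p q -> vstep (vcons i f hf p) (vcons i f hf q).

(* The congruence generated: "is a consequence of". *)
Inductive vequiv n (C : MCat n) (x z : C) : vpath x z -> vpath x z -> Prop :=
| ve_step p q : vstep p q -> vequiv p q
| ve_refl p : vequiv p p
| ve_sym p q : vequiv p q -> vequiv q p
| ve_trans p q r : vequiv p q -> vequiv q r -> vequiv p r.

Record RelCat (n : nat) := {
  rm :> MCat n;
  v_id : forall i (x : rm), mv i (idm x);
  v_comp : forall i (x y z : rm) (f : Hom x y) (g : Hom y z),
      mv i f -> mv i g -> mv i (comp g f);
  w_id : forall x : rm, mw (idm x);
  w_comp : forall (x y z : rm) (f : Hom x y) (g : Hom y z),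
      mw f -> mw g -> mw (comp g f);
  w_sub_v : forall i (x y : rm) (f : Hom x y), mw f -> mv i f;
  (* (i) every map is a finite composite of maps in the v_i *)
  rel_gen : forall (x y : rm) (f : Hom x y), exists p : vpath x y, veval p = f;
  (* (ii) every relation is a consequence of the commutative squares *)
  rel_rel : forall (x y : rm) (p q : vpath x y), veval p = veval q -> vequiv p q }.

Record Fun (C D : Cat) := {
  fob :> C -> D;
  fhom : forall x y : C, Hom x y -> Hom (fob x) (fob y);
  fhom_id : forall x, fhom (idm x) = idm (fob x);
  fhom_comp : forall x y z (f : Hom x y) (g : Hom y z),
      fhom (comp g f) = comp (fhom g) (fhom f) }.
Arguments fhom {C D} F {x y} f : rename.

Record RelFun n (C D : MCat n) := {
  rf :> Fun C D;
  rf_v : forall i (x y : C) (f : Hom x y), mv i f -> mv i (fhom rf f);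
  rf_w : forall (x y : C) (f : Hom x y), mw f -> mw (fhom rf f) }.

Section RelFunOps.
Variable n : nat.

Definition Fid (C : Cat) : Fun C C.
Proof.
  refine {| fob := fun x => x; fhom := fun x y f => f |}; by [].
Defined.

Definition Fcomp (C D E : Cat) (G : Fun D E) (F : Fun C D) : Fun C E.
Proof.
  refine {| fob := fun x => G (F x); fhom := fun x y f => fhom G (fhom F f) |}.
  - by move=> x; rewrite !fhom_id.
  - by move=> x y z f g; rewrite !fhom_comp.
Defined.

Definition Rid (C : MCat n) : RelFun C C.
Proof. refine {| rf := Fid C |}; by []. Defined.

Definition Rcomp (C D E : MCat n) (G : RelFun D E) (F : RelFun C D) : RelFun C E.
Proof.
  refine {| rf := Fcomp G F |}.
  - by move=> i x y f hf; apply: rf_v; apply: rf_v.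
  - by move=> x y f hf; apply: rf_w; apply: rf_w.
Defined.

Definition isomorphism (C D : MCat n) (F : RelFun C D) : Prop :=
  exists G : RelFun D C, Rcomp G F = Rid C /\ Rcomp F G = Rid D.

(* Standard n-relative categories p_n^v x ... x p_1^v x q^w            *)
(* A multi-index ps : 'I_n.+1 -> nat: ps ord0 = q,                     *)
(* ps (lift ord0 i) = p_{i+1} for i : 'I_n.                            *)
Definition PObj (ps : 'I_n.+1 -> nat) := forall k : 'I_n.+1, 'I_(ps k).+1.

Definition Ple ps (x y : PObj ps) : bool := [forall k, (x k <= y k)%N].

Lemma Ple_refl ps (x : PObj ps) : Ple x x.
Proof. by apply/forallP => k. Qed.

Lemma Ple_trans ps (x y z : PObj ps) : Ple y z -> Ple x y -> Ple x z.
Proof.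
  move=> /forallP h2 /forallP h1; apply/forallP => k.
  exact: leq_trans (h1 k) (h2 k).
Qed.

Definition PCat (ps : 'I_n.+1 -> nat) : Cat.
Proof.
  refine {| Ob := PObj ps; Hom := fun x y => is_true (Ple x y);
            idm := @Ple_refl ps; comp := fun x y z g f => Ple_trans g f |};
  by move=> *; apply: bool_irrelevance.
Defined.

Definition Pv ps (i : 'I_n) (x y : PCat ps) (_ : Hom x y) : Prop :=
  forall k : 'I_n.+1, k != ord0 -> k != lift ord0 i -> (x k : nat) = y k.
Definition Pw ps (x y : PCat ps) (_ : Hom x y) : Prop :=
  forall k : 'I_n.+1, k != ord0 -> (x k : nat) = y k.

Definition PStd (ps : 'I_n.+1 -> nat) : MCat n :=
  {| mcat := PCat ps; mv := @Pv ps; mw := @Pw ps |}.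

(* Maps of Delta^{n+1}: tuples of monotone maps [a] -> [b]. *)
Record Mono (a b : nat) := {
  mf :> 'I_a.+1 -> 'I_b.+1;
  mf_mono : forall i j : 'I_a.+1, (i <= j)%N -> (mf i <= mf j)%N }.

Definition Pmap_ob ps' ps (al : forall k, Mono (ps' k) (ps k))
  (x : PObj ps') : PObj ps := fun k => al k (x k).

Lemma Pmap_le ps' ps (al : forall k, Mono (ps' k) (ps k)) (x y : PObj ps') :
  Ple x y -> Ple (Pmap_ob al x) (Pmap_ob al y).
Proof.
  move=> /forallP h; apply/forallP => k; exact: mf_mono (h k).
Qed.

Definition Pmap_fun ps' ps (al : forall k, Mono (ps' k) (ps k)) :
  Fun (PCat ps') (PCat ps).
Proof.
  refine {| fob := (Pmap_ob al : PCat ps' -> PCat ps);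
            fhom := fun x y f => Pmap_le al f |};
  by move=> *; apply: bool_irrelevance.
Defined.

Definition Pmap ps' ps (al : forall k, Mono (ps' k) (ps k)) :
  RelFun (PStd ps') (PStd ps).
Proof.
  refine (@Build_RelFun n (PStd ps') (PStd ps) (Pmap_fun al) _ _).
  - move=> i x y f hf k h1 h2 /=; rewrite /Pmap_ob.
    by have /val_inj -> := hf k h1 h2.
  - move=> x y f hf k h1 /=; rewrite /Pmap_ob.
    by have /val_inj -> := hf k h1.
Defined.

(* The n-simplicial nerve and maps of (n+1)-simplicial sets between    *)
(* nerves.                                                             *)
Definition Simp (C : MCat n) (ps : 'I_n.+1 -> nat) := RelFun (PStd ps) C.

Record SMap (C D : MCat n) := {
  sm : forall ps, Simp C ps -> Simp D ps;
  sm_nat : forall ps ps' (al : forall k, Mono (ps' k) (ps k)) (s : Simp C ps),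
      sm (Rcomp s (Pmap al)) = Rcomp (sm s) (Pmap al) }.

(* (L, eta : NC -> NL) is a universal arrow from NC to N, i.e.
   L = K N C with eta the unit of K -| N at NC. *)
Definition universal (C L : RelCat n) (eta : SMap C L) : Prop :=
  forall (D : RelCat n) (f : SMap C D),
    exists g : RelFun L D,
      (forall ps (s : Simp C ps), Rcomp g (sm eta s) = sm f s) /\
      (forall g' : RelFun L D,
          (forall ps (s : Simp C ps), Rcomp g' (sm eta s) = sm f s) -> g' = g).

(* e : L -> C is the counit: the adjunct of id_{NC}, i.e. N e o eta = id. *)
Definition is_counit (C L : RelCat n) (eta : SMap C L) (e : RelFun L C) : Prop :=
  forall ps (s : Simp C ps), Rcomp e (sm eta s) = s.

End RelFunOps.

(* A map of nerves f : N C -> N D is read off on the smallest simplices. Its values on the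
   points give an object map, and its values on the edges pointing in a single direction
   (labelled by a w-map in the q-direction, by a v_i-map in the p_i-direction) give images of
   the generating maps of C. The 2-simplices in one direction show that these images respect
   composition inside a class, the squares spanned by two directions that they respect the
   commutative squares, and the degenerate edges that they respect identities. By conditions
   (i) and (ii) they extend to a relative functor g : C -> D, unique since it is determined
   on generators; and N g = f because every simplex is a composite of one-direction steps.
   So (C, id) is a universal arrow from N C, i.e. K N C = C, and any other universal arrow
   (L, eta) is isomorphic to it through its counit. *)

From Stdlib Require Import ProofIrrelevance FunctionalExtensionality ClassicalEpsilon.
From Pilot Require Import Defs.
From mathcomp Require Import all_boot.

Set Implicit Arguments. Unset Strict Implicit. Unset Printing Implicit Defensive.

Local Notation cmp := Defs.comp.

Definition castHom (C : Cat) (a a' b b' : C) (ea : a = a') (eb : b = b') (h : Hom a b) :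
    Hom a' b' :=
  match ea in _ = a0 return Hom a0 b' with
  | erefl => match eb in _ = b0 return Hom a b0 with erefl => h end end.

Lemma castHom_irr (C : Cat) (a a' b b' : C) (ea ea' : a = a') (eb eb' : b = b') h :
  castHom ea eb h = castHom ea' eb' h.
Proof. by rewrite (proof_irrelevance _ ea ea') (proof_irrelevance _ eb eb'). Qed.

Lemma castHom_id (C : Cat) (a b : C) (ea : a = a) (eb : b = b) h : castHom ea eb h = h.
Proof. by rewrite (proof_irrelevance _ ea erefl) (proof_irrelevance _ eb erefl). Qed.

Lemma castHom_trans (C : Cat) (a a' a'' b b' b'' : C) (ea : a = a') (ea' : a' = a'')
    (eb : b = b') (eb' : b' = b'') h :
  castHom ea' eb' (castHom ea eb h) = castHom (etrans ea ea') (etrans eb eb') h.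
Proof. by case: a'' / ea'; case: b'' / eb'; case: a' / ea; case: b' / eb. Qed.

Lemma castHom_sym (C : Cat) (a a' b b' : C) (ea : a = a') (eb : b = b') h h' :
  castHom ea eb h = h' -> h = castHom (esym ea) (esym eb) h'.
Proof. by case: a' / ea h'; case: b' / eb. Qed.

Lemma castHom_comp (C : Cat) (a a' b b' c c' : C) (ea : a = a') (eb : b = b') (ec : c = c')
    (g : Hom b c) (h : Hom a b) :
  castHom ea ec (cmp g h) = cmp (castHom eb ec g) (castHom ea eb h).
Proof. by case: a' / ea; case: b' / eb; case: c' / ec. Qed.

Lemma castHom_idm (C : Cat) (a a' : C) (ea ea' : a = a') : castHom ea ea' (idm a) = idm a'.
Proof. by case: a' / ea ea' => ea'; rewrite castHom_id. Qed.

Lemma castHom_mv n (C : MCat n) i (a a' b b' : C) (ea : a = a') (eb : b = b') h :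
  mv i h -> mv i (castHom ea eb h).
Proof. by case: a' / ea; case: b' / eb. Qed.

Lemma castHom_mw n (C : MCat n) (a a' b b' : C) (ea : a = a') (eb : b = b') h :
  mw h -> mw (castHom ea eb h).
Proof. by case: a' / ea; case: b' / eb. Qed.

Lemma RelFun_ext n (A B : MCat n) (F G : RelFun A B) (E : forall x, F x = G x) :
  (forall x y (h : Hom x y), castHom (E x) (E y) (fhom F h) = fhom G h) -> F = G.
Proof.
  case: F E => [[fo fh fid fcomp] fv fw]; case: G => [[go gh gid gcomp] gv gw] /= E H.
  have Eo : fo = go := functional_extensionality _ _ E.
  subst go.
  have Eh : fh = gh.
    apply: functional_extensionality_dep => x; apply: functional_extensionality_dep => y.
    by apply: functional_extensionality => h; rewrite -H castHom_id.
  subst gh.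
  have -> : gid = fid by apply: proof_irrelevance.
  have -> : gcomp = fcomp by apply: proof_irrelevance.
  have -> : gv = fv by apply: proof_irrelevance.
  by have -> : gw = fw by apply: proof_irrelevance.
Qed.

Lemma RelFun_eq_hom n (A B : MCat n) (F G : RelFun A B) (E : F = G) x y (h : Hom x y)
    (ex : F x = G x) (ey : F y = G y) :
  castHom ex ey (fhom F h) = fhom G h.
Proof. by subst G; rewrite castHom_id. Qed.

(* In a poset category parallel maps are equal, so [fhom F] only depends on the endpoints. *)
Lemma fhom_PCat_cast n (ps : 'I_n.+1 -> nat) (D : Cat) (F : Fun (PCat ps) D)
    (u u' v v' : PObj ps) (X Y : D) (e1 : F u = X) (e2 : F v = Y) (e1' : F u' = X)
    (e2' : F v' = Y) (le : Ple u v) (le' : Ple u' v') :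
  u = u' -> v = v' -> castHom e1 e2 (fhom F le) = castHom e1' e2' (fhom F le').
Proof.
  move=> eu ev; subst u' v'.
  by rewrite (castHom_irr e1 e1' e2 e2') (bool_irrelevance le le').
Qed.

Fixpoint vcat n (C : MCat n) (x y z : C) (p : vpath x y) : vpath y z -> vpath x z :=
  match p in vpath x y return vpath y z -> vpath x z with
  | vnil _ => fun q => q
  | vcons _ _ _ i h hv r => fun q => vcons i h hv (vcat r q)
  end.

Lemma veval_cat n (C : MCat n) (x y z : C) (p : vpath x y) (q : vpath y z) :
  veval (vcat p q) = cmp (veval q) (veval p).
Proof.
  elim: p q => [x' q | x' y' z' i h hv r IH q] /=; first by rewrite compm1.
  by rewrite IH Defs.compA.
Qed.

Section Simplices.
Variable n : nat.
Variable C : RelCat n.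

Lemma Ple_coord (ps : 'I_n.+1 -> nat) (z z' : PObj ps) j : Ple z z' -> (z j <= z' j)%N.
Proof. by move/forallP. Qed.

Lemma Ple_eq0 (ps : 'I_n.+1 -> nat) j (z z' : PObj ps) :
  Ple z z' -> (z' j : nat) == 0%N -> (z j : nat) == 0%N.
Proof. by move=> /forallP /(_ j) le; rewrite -!leqn0; apply: leq_trans. Qed.
Arguments Ple_eq0 {ps} j {z z'}.

Lemma Pv_moved (ps : 'I_n.+1 -> nat) (i : 'I_n) (z z' : PCat ps) (le : Hom z z') j :
  Pv i le -> (z j : nat) != z' j -> j = ord0 \/ j = lift ord0 i.
Proof.
  move=> hv hne; case: (eqVneq j ord0) => [->|h0]; first by left.
  case: (eqVneq j (lift ord0 i)) => [->|h1]; first by right.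
  by rewrite (hv j h0 h1) eqxx in hne.
Qed.

Lemma Pw_moved (ps : 'I_n.+1 -> nat) (z z' : PCat ps) (le : Hom z z') j :
  Pw le -> (z j : nat) != z' j -> j = ord0.
Proof.
  move=> hw hne; case: (eqVneq j ord0) => [->|h0] //.
  by rewrite (hw j h0) eqxx in hne.
Qed.

(* [dir_map k h]: [h] may label an edge of a simplex along the coordinate [k]; coordinate
   [ord0] is the [w]-direction [q], coordinate [lift ord0 i] the [v_i]-direction [p_i]. *)
Definition dir_map (k : 'I_n.+1) (x y : C) (h : Hom x y) : Prop :=
  (forall i, (k = ord0 \/ k = lift ord0 i) -> mv i h) /\ (k = ord0 -> mw h).

Lemma dir_map_v i (x y : C) (h : Hom x y) : mv i h -> dir_map (lift ord0 i) h.
Proof.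
  move=> hv; split; last by move/(congr1 val).
  move=> j [] e; first by move/(congr1 val): e.
  by move/lift_inj: e => <-.
Qed.

Lemma dir_map_w (x y : C) (h : Hom x y) : mw h -> dir_map ord0 h.
Proof. by move=> hw; split=> // i _; apply: w_sub_v. Qed.

Lemma dir_map_id k (x : C) : dir_map k (idm x).
Proof. by split=> *; [apply: v_id | apply: w_id]. Qed.

Lemma dir_map_comp k (x y z : C) (h1 : Hom x y) (h2 : Hom y z) :
  dir_map k h1 -> dir_map k h2 -> dir_map k (cmp h2 h1).
Proof.
  move=> [v1 w1] [v2 w2]; split.
  - by move=> i e; apply: v_comp; [apply: v1 | apply: v2].
  - by move=> e; apply: w_comp; [apply: w1 | apply: w2].
Qed.

Definition shape0 : 'I_n.+1 -> nat := fun _ => 0%N.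
Definition vertex0 : PObj shape0 := fun _ => ord0.

Definition point_fun (x : C) : Fun (PCat shape0) C.
Proof.
  refine (@Build_Fun (PCat shape0) C (fun _ => x) (fun _ _ _ => idm x) _ _) => //.
  by move=> *; rewrite comp1m.
Defined.

Definition point (x : C) : Simp C shape0.
Proof.
  refine (@Build_RelFun n (PStd shape0) C (point_fun x) _ _) => /=.
  - by move=> *; apply: v_id.
  - by move=> *; apply: w_id.
Defined.

Definition shape_edge (k : 'I_n.+1) : 'I_n.+1 -> nat := fun j => nat_of_bool (j == k).

Section Edge.
Variables (k : 'I_n.+1) (x y : C) (h : Hom x y) (hh : dir_map k h).

Definition edge_ob (z : PObj (shape_edge k)) : C := if (z k : nat) == 0%N then x else y.

Definition edge_hom (b b' : bool) : (b' -> b) -> Hom (if b then x else y) (if b' then x else y).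
Proof.
  case: b; case: b' => H.
  - exact: idm x.
  - exact: h.
  - exact: False_rect _ (notF (H isT)).
  - exact: idm y.
Defined.

Definition edge_fun : Fun (PCat (shape_edge k)) C.
Proof.
  refine (@Build_Fun (PCat (shape_edge k)) C edge_ob
            (fun z z' le => edge_hom (Ple_eq0 k le)) _ _).
  - move=> z; rewrite /edge_ob; move: (Ple_eq0 _ _); case: ((z k : nat) == 0%N) => //.
  - move=> z1 z2 z3 l1 l2 /=; rewrite /edge_ob.
    move: (Ple_eq0 _ _) (Ple_eq0 k l1) (Ple_eq0 k l2).
    case: ((z1 k : nat) == 0%N); case: ((z2 k : nat) == 0%N); case: ((z3 k : nat) == 0%N)
      => //= p1 p2 p3; rewrite ?comp1m ?compm1 //;
      by case: (notF (p2 isT)) || case: (notF (p3 isT)) || case: (notF (p1 isT)).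
Defined.

Definition edge : Simp C (shape_edge k).
Proof.
  refine (@Build_RelFun n (PStd (shape_edge k)) C edge_fun _ _) => /=.
  - move=> i z z' le hv; rewrite /edge_ob.
    have := @Pv_moved _ i z z' le k hv.
    move: (Ple_eq0 _ _); case E1: ((z k : nat) == 0%N); case E2: ((z' k : nat) == 0%N)
      => //= p moved; try (by apply: v_id); try (by case: (notF (p isT))).
    by apply: hh.1; apply: moved; rewrite (eqP E1) eq_sym E2.
  - move=> z z' le hw; rewrite /edge_ob.
    have := @Pw_moved _ z z' le k hw.
    move: (Ple_eq0 _ _); case E1: ((z k : nat) == 0%N); case E2: ((z' k : nat) == 0%N)
      => //= p moved; try (by apply: w_id); try (by case: (notF (p isT))).
    by apply: hh.2; apply: moved; rewrite (eqP E1) eq_sym E2.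
Defined.

Definition edge_src : PObj (shape_edge k) := fun _ => ord0.
Definition edge_tgt : PObj (shape_edge k) := fun _ => ord_max.
Lemma edge_le : Ple edge_src edge_tgt. Proof. by apply/forallP. Qed.

Lemma edge_tgt_ob : edge edge_tgt = y.
Proof. by rewrite /= /edge_ob /= /shape_edge eqxx. Qed.

Lemma edge_hom_false b (b0 : b = false) (p : b -> true) (e : (if b then x else y) = y) :
  castHom (erefl x) e (edge_hom p) = h.
Proof. by subst b; rewrite castHom_id. Qed.

Lemma edge_hom_spec (et : edge edge_tgt = y) : castHom (erefl x) et (fhom edge edge_le) = h.
Proof.
  have tgt_ne0 : ((edge_tgt k : nat) == 0%N) = false by rewrite /= /shape_edge eqxx.
  exact: (edge_hom_false tgt_ne0 (Ple_eq0 k edge_le) et).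
Qed.

End Edge.

Definition shape_tri (k : 'I_n.+1) : 'I_n.+1 -> nat := fun j => if j == k then 2%N else 0%N.

Section Triangle.
Variables (k : 'I_n.+1) (x y z : C) (h1 : Hom x y) (h2 : Hom y z).
Variables (hh1 : dir_map k h1) (hh2 : dir_map k h2).

Definition tri_ob (m : nat) : C := match m with 0 => x | 1 => y | _ => z end.

Definition tri_hom (m m' : nat) : (m <= m')%N -> Hom (tri_ob m) (tri_ob m').
Proof.
  case: m => [|[|m]]; case: m' => [|[|m']] => p /=.
  - exact: idm x.
  - exact: h1.
  - exact: cmp h2 h1.
  - exact: False_rect _ (notF p).
  - exact: idm y.
  - exact: h2.
  - exact: False_rect _ (notF p).
  - exact: False_rect _ (notF p).
  - exact: idm z.
Defined.

Lemma tri_hom_id m p : tri_hom (m:=m) (m':=m) p = idm (tri_ob m).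
Proof. by case: m p => [|[|m]]. Qed.

Lemma tri_hom_comp m1 m2 m3 p1 p2 p3 :
  tri_hom (m:=m1) (m':=m3) p3 = cmp (tri_hom (m:=m2) (m':=m3) p2) (tri_hom (m:=m1) (m':=m2) p1).
Proof.
  move: p1 p2 p3; case: m1 => [|[|m1]]; case: m2 => [|[|m2]]; case: m3 => [|[|m3]]
    => //= p1 p2 p3; rewrite ?comp1m ?compm1 //;
    by case: (notF p1) || case: (notF p2) || case: (notF p3).
Qed.

Lemma tri_hom_cast m1 m2 (p : (m1 <= m2)%N) M1 M2 (p' : (M1 <= M2)%N)
    (e : tri_ob m1 = tri_ob M1) (e' : tri_ob m2 = tri_ob M2) :
  m1 = M1 -> m2 = M2 -> castHom e e' (tri_hom p) = tri_hom p'.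
Proof.
  by move=> E1 E2; subst M1 M2; rewrite castHom_id (bool_irrelevance p p').
Qed.

Lemma tri_hom_v i m m' p :
  (m != m' -> k = ord0 \/ k = lift ord0 i) -> mv i (tri_hom (m:=m) (m':=m') p).
Proof.
  case: m p => [|[|m]]; case: m' => [|[|m']] => //= p H; try (by apply: v_id);
    try (by case: (notF p)).
  - by apply: hh1.1; apply: H.
  - by apply: v_comp; [apply: hh1.1 | apply: hh2.1]; apply: H.
  - by apply: hh2.1; apply: H.
Qed.

Lemma tri_hom_w m m' p : (m != m' -> k = ord0) -> mw (tri_hom (m:=m) (m':=m') p).
Proof.
  case: m p => [|[|m]]; case: m' => [|[|m']] => //= p H; try (by apply: w_id);
    try (by case: (notF p)).
  - by apply: hh1.2; apply: H.
  - by apply: w_comp; [apply: hh1.2 | apply: hh2.2]; apply: H.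
  - by apply: hh2.2; apply: H.
Qed.

Definition tri_fun : Fun (PCat (shape_tri k)) C.
Proof.
  refine (@Build_Fun (PCat (shape_tri k)) C (fun w => tri_ob (w k))
            (fun w w' le => tri_hom (Ple_coord k le)) _ _).
  - by move=> w; apply: tri_hom_id.
  - by move=> *; apply: tri_hom_comp.
Defined.

Definition tri : Simp C (shape_tri k).
Proof.
  refine (@Build_RelFun n (PStd (shape_tri k)) C tri_fun _ _) => /=.
  - by move=> i w w' le hv; apply: tri_hom_v => /(Pv_moved hv).
  - by move=> w w' le hw; apply: tri_hom_w => /(Pw_moved hw).
Defined.

Definition tri_vertex (m : nat) : PObj (shape_tri k) :=
  fun j => inord (if j == k then m else 0%N).

Lemma tri_vertex_val m j : (m <= 2)%N -> (tri_vertex m j : nat) = if j == k then m else 0%N.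
Proof. by move=> hm; rewrite /tri_vertex inordK // /shape_tri; case: (j == k). Qed.

Lemma tri_vertex_ob m : (m <= 2)%N -> tri (tri_vertex m) = tri_ob m.
Proof. by move=> hm; rewrite /= tri_vertex_val // eqxx. Qed.

Lemma tri_vertex_le m m' : (m <= m')%N -> (m' <= 2)%N -> Ple (tri_vertex m) (tri_vertex m').
Proof.
  move=> hmm hm'; apply/forallP => j; rewrite !tri_vertex_val //; last exact: leq_trans hm'.
  by case: (j == k).
Qed.

Lemma tri_vertex_off m m' : (m <= 2)%N -> (m' <= 2)%N ->
  forall j, j != k -> tri_vertex m j = tri_vertex m' j.
Proof. by move=> hm hm' j hj; apply: val_inj; rewrite /= !tri_vertex_val // (negbTE hj). Qed.

End Triangle.

Definition shape_sq (k1 k2 : 'I_n.+1) : 'I_n.+1 -> nat :=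
  fun j => nat_of_bool ((j == k1) || (j == k2)).

Section Square.
Variables (k1 k2 : 'I_n.+1) (hk : k1 != k2) (a b c d : C).
Variables (x1 : Hom a b) (y2 : Hom b d) (y1 : Hom a c) (x2 : Hom c d).
Variables (hx1 : dir_map k1 x1) (hy2 : dir_map k2 y2) (hy1 : dir_map k2 y1) (hx2 : dir_map k1 x2).
Hypothesis commute : cmp y2 x1 = cmp x2 y1.

(* [b1] ([b2]) records whether the [k1] ([k2]) coordinate is still 0. *)
Definition sq_ob (b1 b2 : bool) : C :=
  if b1 then (if b2 then a else c) else (if b2 then b else d).

Definition sq_hom (b1 b2 b1' b2' : bool) :
  (b1' -> b1) -> (b2' -> b2) -> Hom (sq_ob b1 b2) (sq_ob b1' b2').
Proof.
  case: b1; case: b1'; case: b2; case: b2' => p q /=.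
  all: try exact: False_rect _ (notF (p isT)).
  all: try exact: False_rect _ (notF (q isT)).
  - exact: idm a.
  - exact: y1.
  - exact: idm c.
  - exact: x1.
  - exact: cmp y2 x1.
  - exact: x2.
  - exact: idm b.
  - exact: y2.
  - exact: idm d.
Defined.

Lemma sq_hom_id b1 b2 p q : sq_hom (b1:=b1) (b2:=b2) (b1':=b1) (b2':=b2) p q = idm (sq_ob b1 b2).
Proof. by case: b1 p; case: b2 q. Qed.

Lemma sq_hom_comp b1 b2 c1 c2 e1 e2 p1 q1 p2 q2 p3 q3 :
  sq_hom (b1:=b1) (b2:=b2) (b1':=e1) (b2':=e2) p3 q3 =
  cmp (sq_hom (b1:=c1) (b2:=c2) (b1':=e1) (b2':=e2) p2 q2)
      (sq_hom (b1:=b1) (b2:=b2) (b1':=c1) (b2':=c2) p1 q1).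
Proof.
  move: p1 q1 p2 q2 p3 q3; case: b1; case: b2; case: c1; case: c2; case: e1; case: e2
   => //= p1 q1 p2 q2 p3 q3; rewrite ?comp1m ?compm1 //;
  by case: (notF (p1 isT)) || case: (notF (p2 isT)) || case: (notF (p3 isT)) ||
     case: (notF (q1 isT)) || case: (notF (q2 isT)) || case: (notF (q3 isT)).
Qed.

Lemma sq_hom_cast b1 b2 b1' b2' p q B1 B2 B1' B2' p' q'
    (e : sq_ob b1 b2 = sq_ob B1 B2) (e' : sq_ob b1' b2' = sq_ob B1' B2') :
  b1 = B1 -> b2 = B2 -> b1' = B1' -> b2' = B2' ->
  castHom e e' (sq_hom (b1:=b1) (b2:=b2) (b1':=b1') (b2':=b2') p q) =
  sq_hom (b1:=B1) (b2:=B2) (b1':=B1') (b2':=B2') p' q'.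
Proof.
  move=> E1 E2 E3 E4; subst; rewrite castHom_id.
  by rewrite (proof_irrelevance _ p p') (proof_irrelevance _ q q').
Qed.

Lemma sq_hom_v i b1 b2 b1' b2' p q :
  (b1 != b1' -> k1 = ord0 \/ k1 = lift ord0 i) ->
  (b2 != b2' -> k2 = ord0 \/ k2 = lift ord0 i) ->
  mv i (sq_hom (b1:=b1) (b2:=b2) (b1':=b1') (b2':=b2') p q).
Proof.
  move: p q; case: b1; case: b2; case: b1'; case: b2' => //= p q H1 H2;
  try (by apply: v_id); try (by case: (notF (p isT))); try (by case: (notF (q isT))).
  - by apply: hy1.1; apply: H2.
  - by apply: hx1.1; apply: H1.
  - by apply: v_comp; [apply: hx1.1; apply: H1 | apply: hy2.1; apply: H2].
  - by apply: hx2.1; apply: H1.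
  - by apply: hy2.1; apply: H2.
Qed.

Lemma sq_hom_w b1 b2 b1' b2' p q :
  (b1 != b1' -> k1 = ord0) -> (b2 != b2' -> k2 = ord0) ->
  mw (sq_hom (b1:=b1) (b2:=b2) (b1':=b1') (b2':=b2') p q).
Proof.
  move: p q; case: b1; case: b2; case: b1'; case: b2' => //= p q H1 H2;
  try (by apply: w_id); try (by case: (notF (p isT))); try (by case: (notF (q isT))).
  - by apply: hy1.2; apply: H2.
  - by apply: hx1.2; apply: H1.
  - by apply: w_comp; [apply: hx1.2; apply: H1 | apply: hy2.2; apply: H2].
  - by apply: hx2.2; apply: H1.
  - by apply: hy2.2; apply: H2.
Qed.

Definition sq_fun : Fun (PCat (shape_sq k1 k2)) C.
Proof.
  refine (@Build_Fun (PCat (shape_sq k1 k2)) C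
     (fun z => sq_ob ((z k1 : nat) == 0%N) ((z k2 : nat) == 0%N))
     (fun z z' le => sq_hom (Ple_eq0 k1 le) (Ple_eq0 k2 le)) _ _).
  - by move=> *; apply: sq_hom_id.
  - by move=> *; apply: sq_hom_comp.
Defined.

Lemma eq0_moved (z z' : PObj (shape_sq k1 k2)) j :
  ((z j : nat) == 0%N) != ((z' j : nat) == 0%N) -> (z j : nat) != z' j.
Proof. by apply: contra => /eqP ->. Qed.

Definition sq : Simp C (shape_sq k1 k2).
Proof.
  refine (@Build_RelFun n (PStd (shape_sq k1 k2)) C sq_fun _ _) => /=.
  - by move=> i w w' le hv; apply: sq_hom_v => /eq0_moved /(Pv_moved hv).
  - by move=> w w' le hw; apply: sq_hom_w => /eq0_moved /(Pw_moved hw).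
Defined.

Definition sq_vertex (B1 B2 : bool) : PObj (shape_sq k1 k2) :=
  fun j => inord (nat_of_bool (((j == k1) && ~~ B1) || ((j == k2) && ~~ B2))).

Lemma sq_vertex_val B1 B2 j :
  (sq_vertex B1 B2 j : nat) = nat_of_bool (((j == k1) && ~~ B1) || ((j == k2) && ~~ B2)).
Proof.
  by rewrite /sq_vertex inordK // /shape_sq; case: (j == k1); case: (j == k2); case: B1; case: B2.
Qed.

Lemma sq_vertex_k1 B1 B2 : ((sq_vertex B1 B2 k1 : nat) == 0%N) = B1.
Proof.
  have E : (k1 == k2) = false := negbTE hk.
  by rewrite sq_vertex_val eqxx E; case: B1.
Qed.

Lemma sq_vertex_k2 B1 B2 : ((sq_vertex B1 B2 k2 : nat) == 0%N) = B2.
Proof.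
  have E : (k2 == k1) = false by rewrite eq_sym; apply: negbTE.
  by rewrite sq_vertex_val eqxx E /=; case: B2.
Qed.

Lemma sq_vertex_ob B1 B2 : sq (sq_vertex B1 B2) = sq_ob B1 B2.
Proof. by rewrite /= sq_vertex_k1 sq_vertex_k2. Qed.

Lemma sq_vertex_le (B1 B2 B1' B2' : bool) :
  (B1' -> B1) -> (B2' -> B2) -> Ple (sq_vertex B1 B2) (sq_vertex B1' B2').
Proof.
  move=> H1 H2; apply/forallP => j; rewrite !sq_vertex_val.
  by move: H1 H2; case: B1; case: B2; case: B1'; case: B2' => //= H1 H2;
     try (by case: (notF (H1 isT))); try (by case: (notF (H2 isT)));
     case: (j == k1); case: (j == k2).
Qed.

Lemma sq_vertex_off1 B2 j : j != k1 -> sq_vertex true B2 j = sq_vertex false B2 j.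
Proof. by move=> hj; apply: val_inj; rewrite /= !sq_vertex_val (negbTE hj). Qed.

Lemma sq_vertex_off2 B1 j : j != k2 -> sq_vertex B1 true j = sq_vertex B1 false j.
Proof. by move=> hj; apply: val_inj; rewrite /= !sq_vertex_val (negbTE hj) !orbF. Qed.

End Square.
End Simplices.
Arguments Ple_eq0 {n ps} j {z z'}.

Section SimplicialMapData.
Variable n : nat.
Variables C D : RelCat n.
Variable f : SMap C D.

Definition smap_ob (x : C) : D := sm f (point x) (@vertex0 n).

Definition vertex_incl (ps : 'I_n.+1 -> nat) (a : PObj ps) : forall k, Mono (@shape0 n k) (ps k) :=
  fun k => @Build_Mono _ _ (fun _ => a k) (fun _ _ _ => leqnn _).

Lemma restrict_vertex ps (s : Simp C ps) a : Rcomp s (Pmap (vertex_incl a)) = point (s a).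
Proof.
  apply: (@RelFun_ext n _ _ (Rcomp s (Pmap (vertex_incl a))) (point (s a)) (fun _ => erefl))
    => x y h.
  rewrite castHom_id /= (bool_irrelevance (Pmap_le (vertex_incl a) h) (Ple_refl a)).
  exact: (fhom_id s a).
Qed.

Lemma sm_vertex ps (s : Simp C ps) a : sm f s a = smap_ob (s a).
Proof.
  change (Rcomp (sm f s) (Pmap (vertex_incl a)) (@vertex0 n) = smap_ob (s a)).
  by rewrite -sm_nat restrict_vertex.
Qed.

Definition smap_hom (k : 'I_n.+1) (x y : C) (h : Hom x y) (hh : dir_map k h) :
    Hom (smap_ob x) (smap_ob y) :=
  castHom (sm_vertex (edge hh) (edge_src k))
          (etrans (sm_vertex (edge hh) (edge_tgt k)) (f_equal smap_ob (edge_tgt_ob hh)))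
          (fhom (sm f (edge hh)) (edge_le k)).

Lemma smap_hom_irr k (x y : C) (h : Hom x y) (hh hh' : dir_map k h) :
  smap_hom hh = smap_hom hh'.
Proof. by rewrite (proof_irrelevance _ hh hh'). Qed.

Lemma smap_hom_v i (x y : C) (h : Hom x y) (hh : dir_map (lift ord0 i) h) : mv i (smap_hom hh).
Proof.
  apply: castHom_mv; apply: rf_v.
  by move=> j _ hj /=; rewrite /shape_edge (negbTE hj).
Qed.

Lemma smap_hom_w (x y : C) (h : Hom x y) (hh : dir_map ord0 h) : mw (smap_hom hh).
Proof.
  apply: castHom_mw; apply: rf_w.
  by move=> j hj /=; rewrite /shape_edge (negbTE hj).
Qed.

Section Step.
Variables (ps : 'I_n.+1 -> nat) (s : Simp C ps) (a b : PObj ps) (le : @Hom (PCat ps) a b).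
Variables (k : 'I_n.+1) (hab : forall j, j != k -> a j = b j).

Lemma step_incl_mono j (t t' : 'I_(shape_edge k j).+1) : (t <= t')%N ->
  ((if (t : nat) == 0%N then a j else b j) <= (if (t' : nat) == 0%N then a j else b j))%N.
Proof.
  move=> le'; case E1: ((t : nat) == 0%N); case E2: ((t' : nat) == 0%N) => //.
  - exact: Ple_coord j le.
  - by move: le'; rewrite (eqP E2) leqn0 E1.
Qed.

Definition step_incl : forall j, Mono (shape_edge k j) (ps j) :=
  fun j => @Build_Mono _ _ (fun t => if (t : nat) == 0%N then a j else b j) (@step_incl_mono j).

Lemma step_incl_ob (z : PObj (shape_edge k)) :
  Pmap_ob step_incl z = if (z k : nat) == 0%N then a else b.
Proof.
  apply: functional_extensionality_dep => j; rewrite /Pmap_ob /=.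
  case: (eqVneq j k) => [->|hj]; first by case: ((z k : nat) == 0%N).
  case: ifP => [z0|]; first by case: ((z k : nat) == 0%N) => //; apply: hab.
  by case: (z j) => t /=; rewrite /shape_edge (negbTE hj) ltnS leqn0 => /eqP ->.
Qed.

Lemma fhom_step_cast (u v a' b' : PObj ps) (e1 : s u = s a') (e2 : s v = s b')
    (L : @Hom (PCat ps) u v) (L' : @Hom (PCat ps) a' b') :
  u = a' -> v = b' -> castHom e1 e2 (fhom s L) = fhom s L'.
Proof.
  by move=> eu ev; rewrite (@fhom_PCat_cast n ps C s u a' v b' _ _ e1 e2 erefl erefl L L').
Qed.

Variable hh : dir_map k (fhom s le).

Lemma restrict_step : Rcomp s (Pmap step_incl) = edge hh.
Proof.
  have step_incl_s z : s (Pmap_ob step_incl z) = if (z k : nat) == 0%N then s a else s b.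
    by rewrite step_incl_ob; case: ((z k : nat) == 0%N).
  apply: (@RelFun_ext n _ _ (Rcomp s (Pmap step_incl)) (edge hh) step_incl_s) => z z' L /=.
  rewrite /edge_ob.
  move: (step_incl_s z) (step_incl_s z') (Ple_eq0 k L) (step_incl_ob z) (step_incl_ob z').
  case: ((z k : nat) == 0%N); case: ((z' k : nat) == 0%N) => //= e e' p Ez Ez'.
  - by rewrite (fhom_step_cast _ _ _ (Ple_refl a) Ez Ez') (fhom_id s a).
  - exact: fhom_step_cast.
  - by case: (notF (p isT)).
  - by rewrite (fhom_step_cast _ _ _ (Ple_refl b) Ez Ez') (fhom_id s b).
Qed.

Lemma sm_step : castHom (sm_vertex s a) (sm_vertex s b) (fhom (sm f s) le) = smap_hom hh.
Proof.
  have sm_restriction (E : Simp C (shape_edge k)) X Y (e0 : sm f E (edge_src k) = X)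
      (e1 : sm f E (edge_tgt k) = Y) (ea : sm f s a = X) (eb : sm f s b = Y) :
      E = Rcomp s (Pmap step_incl) ->
      castHom e0 e1 (fhom (sm f E) (edge_le k)) = castHom ea eb (fhom (sm f s) le).
    move=> HE; subst E; move: e0 e1; rewrite sm_nat => e0 e1.
    apply: (@fhom_PCat_cast n ps D (sm f s) _ a _ b _ _ e0 e1 ea eb _ le).
    - exact: (step_incl_ob (edge_src k)).
    - by change (Pmap_ob step_incl (edge_tgt k) = b); rewrite step_incl_ob /= /shape_edge eqxx.
  by symmetry; apply: sm_restriction; rewrite restrict_step.
Qed.

End Step.

Lemma sm_step_cast ps (s : Simp C ps) (a b : PObj ps) (le : @Hom (PCat ps) a b) k
    (hab : forall j, j != k -> a j = b j) (x y : C) (ea : s a = x) (eb : s b = y)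
    (h : Hom x y) (hh : dir_map k h) (Ea : sm f s a = smap_ob x) (Eb : sm f s b = smap_ob y) :
  castHom ea eb (fhom s le) = h -> castHom Ea Eb (fhom (sm f s) le) = smap_hom hh.
Proof.
  by move=> H; subst x y h; rewrite -(sm_step hab hh); apply: castHom_irr.
Qed.

Lemma smap_hom_id k (x : C) (hh : dir_map k (idm x)) : smap_hom hh = idm (smap_ob x).
Proof.
  rewrite -(@sm_step_cast _ (point x) (@vertex0 n) (@vertex0 n) (Ple_refl _) k (fun _ _ => erefl)
            x x erefl erefl (idm x) hh (sm_vertex _ _) (sm_vertex _ _) erefl).
  by rewrite (fhom_id (sm f (point x)) (@vertex0 n)) castHom_idm.
Qed.

Lemma smap_hom_comp k (x y z : C) (h1 : Hom x y) (h2 : Hom y z) (hh1 : dir_map k h1)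
    (hh2 : dir_map k h2) (hh : dir_map k (cmp h2 h1)) :
  smap_hom hh = cmp (smap_hom hh2) (smap_hom hh1).
Proof.
  pose T := tri hh1 hh2.
  have e0 : T (tri_vertex k 0) = x := tri_vertex_ob hh1 hh2 (isT : (0 <= 2)%N).
  have e1 : T (tri_vertex k 1) = y := tri_vertex_ob hh1 hh2 (isT : (1 <= 2)%N).
  have e2 : T (tri_vertex k 2) = z := tri_vertex_ob hh1 hh2 (isT : (2 <= 2)%N).
  have V0 := etrans (sm_vertex T (tri_vertex k 0)) (f_equal smap_ob e0).
  have V1 := etrans (sm_vertex T (tri_vertex k 1)) (f_equal smap_ob e1).
  have V2 := etrans (sm_vertex T (tri_vertex k 2)) (f_equal smap_ob e2).
  have l01 := @tri_vertex_le _ k 0 1 isT isT.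
  have l12 := @tri_vertex_le _ k 1 2 isT isT.
  have l02 := @tri_vertex_le _ k 0 2 isT isT.
  have s01 : castHom V0 V1 (fhom (sm f T) (l01 : @Hom (PCat _) _ _)) = smap_hom hh1.
    apply: (@sm_step_cast _ T _ _ l01 k (@tri_vertex_off _ k 0 1 isT isT) _ _ e0 e1 h1 hh1 V0 V1).
    apply: (@tri_hom_cast _ _ _ _ _ h1 h2 _ _ (Ple_coord k l01) 0 1 isT);
      by rewrite tri_vertex_val // eqxx.
  have s12 : castHom V1 V2 (fhom (sm f T) (l12 : @Hom (PCat _) _ _)) = smap_hom hh2.
    apply: (@sm_step_cast _ T _ _ l12 k (@tri_vertex_off _ k 1 2 isT isT) _ _ e1 e2 h2 hh2 V1 V2).
    apply: (@tri_hom_cast _ _ _ _ _ h1 h2 _ _ (Ple_coord k l12) 1 2 isT);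
      by rewrite tri_vertex_val // eqxx.
  have s02 : castHom V0 V2 (fhom (sm f T) (l02 : @Hom (PCat _) _ _)) = smap_hom hh.
    apply: (@sm_step_cast _ T _ _ l02 k (@tri_vertex_off _ k 0 2 isT isT) _ _ e0 e2 _ hh V0 V2).
    apply: (@tri_hom_cast _ _ _ _ _ h1 h2 _ _ (Ple_coord k l02) 0 2 isT);
      by rewrite tri_vertex_val // eqxx.
  rewrite -s01 -s12 -s02 -castHom_comp -fhom_comp.
  by congr castHom; congr fhom; apply: bool_irrelevance.
Qed.

Lemma smap_hom_square k1 k2 (hk : k1 != k2) (a b c d : C) (x1 : Hom a b) (y2 : Hom b d)
    (y1 : Hom a c) (x2 : Hom c d) (hx1 : dir_map k1 x1) (hy2 : dir_map k2 y2)
    (hy1 : dir_map k2 y1) (hx2 : dir_map k1 x2) :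
  cmp y2 x1 = cmp x2 y1 ->
  cmp (smap_hom hy2) (smap_hom hx1) = cmp (smap_hom hx2) (smap_hom hy1).
Proof.
  move=> commute; pose S := sq hx1 hy2 hy1 hx2 commute.
  have eA : S (sq_vertex k1 k2 true true) = a := sq_vertex_ob hk _ _ _ _ _ _ _.
  have eB : S (sq_vertex k1 k2 false true) = b := sq_vertex_ob hk _ _ _ _ _ _ _.
  have eC : S (sq_vertex k1 k2 true false) = c := sq_vertex_ob hk _ _ _ _ _ _ _.
  have eD : S (sq_vertex k1 k2 false false) = d := sq_vertex_ob hk _ _ _ _ _ _ _.
  have VA := etrans (sm_vertex S _) (f_equal smap_ob eA).
  have VB := etrans (sm_vertex S _) (f_equal smap_ob eB).
  have VC := etrans (sm_vertex S _) (f_equal smap_ob eC).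
  have VD := etrans (sm_vertex S _) (f_equal smap_ob eD).
  have lAB := @sq_vertex_le _ k1 k2 true true false true (fun _ => isT) (fun _ => isT).
  have lBD := @sq_vertex_le _ k1 k2 false true false false (fun h => h) (fun _ => isT).
  have lAC := @sq_vertex_le _ k1 k2 true true true false (fun _ => isT) (fun _ => isT).
  have lCD := @sq_vertex_le _ k1 k2 true false false false (fun _ => isT) (fun h => h).
  have sAB : castHom VA VB (fhom (sm f S) (lAB : @Hom (PCat _) _ _)) = smap_hom hx1.
    apply: (@sm_step_cast _ S _ _ lAB k1 (@sq_vertex_off1 _ k1 k2 true) _ _ eA eB x1 hx1 VA VB).
    by apply: (@sq_hom_cast _ _ _ _ _ _ x1 y2 y1 x2 _ _ _ _ _ _ true true false true
                 (fun _ => isT) (fun _ => isT)); rewrite ?sq_vertex_k1 ?sq_vertex_k2.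
  have sBD : castHom VB VD (fhom (sm f S) (lBD : @Hom (PCat _) _ _)) = smap_hom hy2.
    apply: (@sm_step_cast _ S _ _ lBD k2 (@sq_vertex_off2 _ k1 k2 false) _ _ eB eD y2 hy2 VB VD).
    by apply: (@sq_hom_cast _ _ _ _ _ _ x1 y2 y1 x2 _ _ _ _ _ _ false true false false
                 (fun h => h) (fun _ => isT)); rewrite ?sq_vertex_k1 ?sq_vertex_k2.
  have sAC : castHom VA VC (fhom (sm f S) (lAC : @Hom (PCat _) _ _)) = smap_hom hy1.
    apply: (@sm_step_cast _ S _ _ lAC k2 (@sq_vertex_off2 _ k1 k2 true) _ _ eA eC y1 hy1 VA VC).
    by apply: (@sq_hom_cast _ _ _ _ _ _ x1 y2 y1 x2 _ _ _ _ _ _ true true true false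
                 (fun _ => isT) (fun _ => isT)); rewrite ?sq_vertex_k1 ?sq_vertex_k2.
  have sCD : castHom VC VD (fhom (sm f S) (lCD : @Hom (PCat _) _ _)) = smap_hom hx2.
    apply: (@sm_step_cast _ S _ _ lCD k1 (@sq_vertex_off1 _ k1 k2 false) _ _ eC eD x2 hx2 VC VD).
    by apply: (@sq_hom_cast _ _ _ _ _ _ x1 y2 y1 x2 _ _ _ _ _ _ true false false false
                 (fun _ => isT) (fun h => h)); rewrite ?sq_vertex_k1 ?sq_vertex_k2.
  rewrite -sAB -sBD -sAC -sCD -!castHom_comp -!fhom_comp.
  by congr castHom; congr fhom; apply: bool_irrelevance.
Qed.

End SimplicialMapData.

Lemma fhom_cast_tgt (C D : Cat) (F : Fun C D) (x y y0 : C) (e : y0 = y) (u : Hom x y0)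
    (h : Hom x y) :
  castHom erefl e u = h -> fhom F u = castHom erefl (f_equal F (esym e)) (fhom F h).
Proof. by subst y0 => /= <-. Qed.

(* Relative functors out of [C] are determined by their action on the nerve: the points
   give the objects and, by (i), the edges labelled by the [v_i]-maps give all maps. *)
Lemma RelFun_eq_simplices n (C D : RelCat n) (g1 g2 : RelFun C D) :
  (forall ps (s : Simp C ps), Rcomp g1 s = Rcomp g2 s) -> g1 = g2.
Proof.
  move=> H.
  have E x : g1 x = g2 x := f_equal (fun F : Simp D (@shape0 n) => F (@vertex0 n)) (H _ (point x)).
  apply: (@RelFun_ext n C D g1 g2 E) => x y h.
  have [p <-] := rel_gen h.
  elim: p => [x' | x' y' z' i h' hv r IH] /=; first by rewrite !fhom_id castHom_idm.
  rewrite !fhom_comp (castHom_comp _ (E y')) IH; congr cmp.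
  have hh := dir_map_v hv.
  have g12 := RelFun_eq_hom (H _ (edge hh)) (edge_le _) (E x') (E (edge hh (edge_tgt _))).
  have spec := edge_hom_spec (edge_tgt_ob hh).
  change (castHom (E x') (E (edge hh (edge_tgt (lift ord0 i))))
            (fhom g1 (fhom (edge hh) (edge_le _))) = fhom g2 (fhom (edge hh) (edge_le _))) in g12.
  rewrite (fhom_cast_tgt g1 spec) (fhom_cast_tgt g2 spec) castHom_trans in g12.
  by rewrite (castHom_sym g12) !castHom_trans castHom_id.
Qed.

Section Extension.
Variable n : nat.
Variables C D : RelCat n.
Variable f : SMap C D.

Local Notation g := (smap_ob f).

Fixpoint path_hom (x z : C) (p : vpath x z) : Hom (g x) (g z) :=
  match p in vpath x z return Hom (g x) (g z) with
  | vnil x => idm (g x)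
  | vcons _ _ _ i h hv r => cmp (path_hom r) (smap_hom f (dir_map_v hv))
  end.

Lemma path_hom_step (x z : C) (p q : vpath x z) : vstep p q -> path_hom p = path_hom q.
Proof.
  elim=> {x z p q}.
  - move=> a b c d z i j x1 y2 y1 x2 hx1 hy2 hy1 hx2 r commute /=.
    rewrite -!Defs.compA; congr cmp.
    case: (eqVneq i j) => [eij|nij].
    + subst j.
      have hxy := dir_map_comp (dir_map_v hx1) (dir_map_v hy2).
      have hyx := dir_map_comp (dir_map_v hy1) (dir_map_v hx2).
      rewrite -(smap_hom_comp f _ _ hxy) -(smap_hom_comp f _ _ hyx).
      by move: hxy hyx; rewrite commute; apply: smap_hom_irr.
    + have hk : lift ord0 i != lift ord0 j by apply: contra nij => /eqP /lift_inj ->.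
      exact: (smap_hom_square f hk (dir_map_v hx1) (dir_map_v hy2) (dir_map_v hy1)
                (dir_map_v hx2) commute).
  - by move=> x z i h r /=; rewrite smap_hom_id compm1.
  - by move=> x y z i h hf p q _ /= ->.
Qed.

Lemma path_hom_equiv (x z : C) (p q : vpath x z) : vequiv p q -> path_hom p = path_hom q.
Proof.
  elim=> {p q} //.
  - by move=> p q; apply: path_hom_step.
  - by move=> p q r _ -> _ ->.
Qed.

Lemma path_hom_cat (x y z : C) (p : vpath x y) (q : vpath y z) :
  path_hom (vcat p q) = cmp (path_hom q) (path_hom p).
Proof.
  elim: p q => [x' q | x' y' z' i h hv r IH q] /=; first by rewrite compm1.
  by rewrite IH Defs.compA.
Qed.

Definition path_of (x y : C) (h : Hom x y) : vpath x y :=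
  proj1_sig (constructive_indefinite_description _ (rel_gen h)).

Lemma path_ofP (x y : C) (h : Hom x y) : veval (path_of h) = h.
Proof. exact: (proj2_sig (constructive_indefinite_description _ (rel_gen h))). Qed.

Definition ext_hom (x y : C) (h : Hom x y) : Hom (g x) (g y) := path_hom (path_of h).

Lemma ext_hom_path (x y : C) (h : Hom x y) (p : vpath x y) : veval p = h -> ext_hom h = path_hom p.
Proof. by move=> ph; apply: path_hom_equiv; apply: rel_rel; rewrite path_ofP ph. Qed.

Definition ext_fun : Fun C D.
Proof.
  refine (@Build_Fun C D g ext_hom _ _).
  - by move=> x; rewrite (@ext_hom_path _ _ _ (vnil x)).
  - move=> x y z h1 h2.
    rewrite (@ext_hom_path _ _ _ (vcat (path_of h1) (path_of h2))) ?path_hom_cat //.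
    by rewrite veval_cat !path_ofP.
Defined.

Lemma ext_hom_v i (x y : C) (h : Hom x y) (hv : mv i h) : ext_hom h = smap_hom f (dir_map_v hv).
Proof. by rewrite (@ext_hom_path _ _ _ (vcons i h hv (vnil y))) /= comp1m. Qed.

Hypothesis hn : (0 < n)%N.

(* A [w]-map [h] is also a [v_i]-map; its [q]-edge and its [p_i]-edge have the same image,
   because they are opposite sides of a square whose other sides are identities. *)
Lemma ext_hom_w (x y : C) (h : Hom x y) (hw : mw h) : ext_hom h = smap_hom f (dir_map_w hw).
Proof.
  pose i0 : 'I_n := Ordinal hn.
  rewrite (ext_hom_v (w_sub_v i0 hw)).
  have := smap_hom_square f (isT : ord0 != lift ord0 i0) (dir_map_w hw) (dir_map_id _ y)
            (dir_map_v (w_sub_v i0 hw)) (dir_map_id _ y) erefl.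
  by rewrite !smap_hom_id !comp1m => ->.
Qed.

Definition ext_relfun : RelFun C D.
Proof.
  refine (@Build_RelFun n C D ext_fun _ _) => /=.
  - by move=> i x y h hv; rewrite (ext_hom_v hv); apply: smap_hom_v.
  - by move=> x y h hw; rewrite (ext_hom_w hw); apply: smap_hom_w.
Defined.

Lemma ext_hom_dir k (x y : C) (h : Hom x y) (hh : dir_map k h) : ext_hom h = smap_hom f hh.
Proof.
  case: (unliftP ord0 k) => [j ->|->] in hh *.
  - by rewrite (ext_hom_v (hh.1 j (or_intror erefl))); apply: smap_hom_irr.
  - by rewrite (ext_hom_w (hh.2 erefl)); apply: smap_hom_irr.
Qed.

Lemma dir_map_step ps (s : Simp C ps) (u v : PObj ps) (L : @Hom (PCat ps) u v) k :
  (forall j, j != k -> u j = v j) -> dir_map k (fhom s L).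
Proof.
  move=> huv; split.
  - by move=> i hk; apply: rf_v => j h0 h1; congr val; apply: huv; case: hk => ->.
  - by move=> hk; apply: rf_w => j h0; congr val; apply: huv; rewrite hk.
Qed.

Section Naturality.
Variables (ps : 'I_n.+1 -> nat) (s : Simp C ps) (a b : PObj ps) (le : @Hom (PCat ps) a b).

(* Consecutive [interp t] differ only in coordinate [t], so [fhom s le] is a composite of
   one-direction steps. *)
Definition interp (t : nat) : PObj ps := fun j => if (j < t)%N then b j else a j.

Lemma interp_ge t : Ple a (interp t).
Proof. by apply/forallP => j; rewrite /interp; case: ifP => // _; apply: Ple_coord le. Qed.

Lemma interp_step t : Ple (interp t) (interp t.+1).
Proof.
  apply/forallP => j; rewrite /interp; case: (ltnP j t) => [jt|_].
  - by rewrite ltnS (ltnW jt).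
  - by case: ifP => // _; apply: Ple_coord le.
Qed.

Lemma ext_hom_interp t : (t <= n.+1)%N -> forall L : Ple a (interp t),
  ext_hom (fhom s L) = castHom (sm_vertex f s a) (sm_vertex f s (interp t)) (fhom (sm f s) L).
Proof.
  elim: t => [_|t IH ht] L.
    have interp0 : interp 0 = a by apply: functional_extensionality_dep => j.
    move: L; rewrite interp0 => L; rewrite (bool_irrelevance L (Ple_refl a)).
    rewrite (fhom_id s a : fhom s (Ple_refl a) = _) (fhom_id ext_fun (s a) : ext_hom _ = _).
    by rewrite (fhom_id (sm f s) a : fhom (sm f s) (Ple_refl a) = _) castHom_idm.
  pose k : 'I_n.+1 := Ordinal ht.
  have off_k j : j != k -> interp t j = interp t.+1 j.
    move=> hj; have jt : (j == t :> nat) = false.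
      by apply/eqP => jt; move/eqP: hj; apply; apply: val_inj.
    by rewrite /interp; have -> : (j < t.+1)%N = (j < t)%N by rewrite ltnS leq_eqVlt jt.
  have Ls := interp_step t; have Lt := interp_ge t.
  rewrite (bool_irrelevance L (Ple_trans Ls Lt)).
  change (ext_hom (fhom s (cmp (Ls : @Hom (PCat ps) _ _) (Lt : @Hom (PCat ps) _ _))) =
    castHom (sm_vertex f s a) (sm_vertex f s (interp t.+1))
      (fhom (sm f s) (cmp (Ls : @Hom (PCat ps) _ _) (Lt : @Hom (PCat ps) _ _)))).
  rewrite !fhom_comp (fhom_comp ext_fun _ _ : ext_hom (cmp _ _) = _).
  rewrite (castHom_comp _ (sm_vertex f s (interp t))) -(IH (ltnW ht)); congr cmp.
  have hh := dir_map_step s (Ls : @Hom (PCat ps) _ _) off_k.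
  change (ext_hom (fhom s (Ls : @Hom (PCat ps) _ _)) = castHom (sm_vertex f s (interp t))
    (sm_vertex f s (interp t.+1)) (fhom (sm f s) Ls)).
  by rewrite (ext_hom_dir hh); symmetry; apply: sm_step.
Qed.

Lemma ext_hom_sm :
  ext_hom (fhom s le) = castHom (sm_vertex f s a) (sm_vertex f s b) (fhom (sm f s) le).
Proof.
  have interp_last : interp n.+1 = b.
    by apply: functional_extensionality_dep => j; rewrite /interp ltn_ord.
  by move: (@ext_hom_interp n.+1 (leqnn _)); rewrite interp_last; apply.
Qed.

End Naturality.

Lemma ext_relfun_sm ps (s : Simp C ps) : Rcomp ext_relfun s = sm f s.
Proof.
  apply: (@RelFun_ext n _ _ (Rcomp ext_relfun s) (sm f s) (fun a => esym (sm_vertex f s a)))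
    => a b le.
  change (castHom (esym (sm_vertex f s a)) (esym (sm_vertex f s b)) (ext_hom (fhom s le)) =
          fhom (sm f s) le).
  by rewrite ext_hom_sm castHom_trans castHom_id.
Qed.

End Extension.

Definition idS n (C : RelCat n) : SMap C C :=
  {| sm := fun ps s => s; sm_nat := fun _ _ _ _ => erefl |}.

Lemma RcompA n (A B X Y : MCat n) (h : RelFun X Y) (g : RelFun B X) (f : RelFun A B) :
  Rcomp (Rcomp h g) f = Rcomp h (Rcomp g f).
Proof.
  apply: (@RelFun_ext n _ _ (Rcomp (Rcomp h g) f) (Rcomp h (Rcomp g f)) (fun _ => erefl)) => x y u.
  exact: castHom_id.
Qed.

Lemma Rcomp_idl n (A B : MCat n) (f : RelFun A B) : Rcomp (Rid B) f = f.
Proof.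
  apply: (@RelFun_ext n _ _ (Rcomp (Rid B) f) f (fun _ => erefl)) => x y u.
  exact: castHom_id.
Qed.

Lemma universal_idS n (hn : (0 < n)%N) (C : RelCat n) : universal (idS C).
Proof.
  move=> D f; exists (ext_relfun f hn); split=> [ps s|g' g'_sm]; first exact: ext_relfun_sm.
  by apply: RelFun_eq_simplices => ps s; rewrite (g'_sm ps s) ext_relfun_sm.
Qed.

Theorem proposition4p4 (n : nat) (hn : (1 <= n)%N) (C : RelCat n) :
  (exists (L : RelCat n) (eta : SMap C L), universal eta) /\
  (forall (L : RelCat n) (eta : SMap C L), universal eta ->
     forall e : RelFun L C, is_counit eta e -> isomorphism e).
Proof.
  split; first by exists C, (idS C); apply: universal_idS.
  move=> L eta eta_univ e e_counit.
  have [h [h_eta _]] := universal_idS hn eta.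
  exists h; split.
  - have [g [_ eta_uniq]] := eta_univ L eta.
    rewrite (eta_uniq (Rcomp h e)); last by move=> ps s; rewrite RcompA e_counit h_eta.
    by symmetry; apply: eta_uniq => ps s; apply: Rcomp_idl.
  - apply: RelFun_eq_simplices => ps s.
    by rewrite RcompA h_eta e_counit Rcomp_idl.
Qed.
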